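(* Let $f(x,y)=\left(x+\frac1y,\ y-\frac1y-x\right)$ be the Hénon–Devaney map, with inverse $f^{-1}(u,v)=\left(u-\frac{1}{u+v},\ u+v\right)$ defined for $u+v\neq0$. For $n\ge1$ let $T_n$ be the set of $t\in\mathbb{R}$ such that $f^{-k}(t,0)$ is defined and does not lie on the line $\{y=-x\}$ for every $k=0,1,\dots,n-1$ (so that $f^{-n}(t,0)$ is defined), and write $f^{-n}(t,0)=(f^{-n}_x(t,0),f^{-n}_y(t,0))$. Then for every $n\ge1$: (a) on each connected component of $T_n$, both functions $t\mapsto f^{-n}_x(t,0)$ and $t\mapsto f^{-n}_y(t,0)$ are increasing; (b) $f^{-(n-1)}(\{y=0\})\cap f^{-n}(\{y=0\})=\emptyset$, where $f^{-k}(\{y=0\})=\{f^{-k}(t,0): t\in T_k\}$ for $k\ge1$ and $f^{0}(\{y=0\})=\{y=0\}$. *)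

From HB Require Import structures.
From mathcomp Require Import all_boot all_order all_algebra.
From mathcomp Require Import all_classical all_reals all_analysis.
Set Implicit Arguments. Unset Strict Implicit. Unset Printing Implicit Defensive.
Import Order.TTheory GRing.Theory Num.Theory.
Local Open Scope ring_scope.
Local Open Scope classical_set_scope.

Section Henon.
Variable R : realType.

Definition henon_inv (p : R * R) : option (R * R) :=
  if p.1 + p.2 == 0 then None
  else Some (p.1 - 1 / (p.1 + p.2), p.1 + p.2).

Fixpoint henon_inv_iter (k : nat) (p : R * R) : option (R * R) :=
  match k with
  | 0 => Some p
  | k'.+1 => match henon_inv_iter k' p with
             | Some q => henon_inv q
             | None => None
             end
  end.

Definition T (n : nat) : set R :=
  [set t | forall k, (k < n)%N ->
     exists q, henon_inv_iter k (t, 0) = Some q /\ q.1 + q.2 != 0].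

(* f^{-n}(t,0) (meaningful for t in T n; junk value (0,0) otherwise). *)
Definition henon_inv_n (n : nat) (t : R) : R * R :=
  odflt (0, 0) (henon_inv_iter n (t, 0)).

Definition preimage_line (k : nat) : set (R * R) :=
  if k is 0 then [set p | p.2 = 0]
  else [set henon_inv_n k t | t in T k].

End Henon.

From HB Require Import structures.
From mathcomp Require Import all_boot all_order all_algebra.
From mathcomp Require Import all_classical all_reals all_analysis.
From mathcomp Require Import ring lra.
Import numFieldTopology.Exports numFieldNormedType.Exports.
Import Order.TTheory GRing.Theory Num.Theory.
Local Open Scope ring_scope.
Local Open Scope classical_set_scope.

(* Wherever f^{-1} is defined it agrees with the total map
   F(u, v) = (u - 1/(u+v), u+v).  A connected component of T_n is an interval,
   so by the intermediate value theorem the coordinate sum of F^k(t,0), k < n,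
   keeps a constant sign as t ranges over it.  For two points with u < u', v <= v' and u+v, u'+v' of the
   same sign, F increases both coordinates, because y |-> 1/y decreases on each
   half-line; induction on k gives (a).  For (b): F is injective, so if
   f^{-n}(t,0) = F^{n-1}(F(t,0)) lies on f^{-(n-1)}({y=0}), then F(t,0) =
   (t - 1/t, t) lies on {y=0}, i.e. t = 0, which T_n excludes. *)

Lemma iter_inj {T : Type} {f : T -> T} {n : nat} : injective f -> injective (iter n f).
Proof. by move=> f_inj; elim: n => [|n IHn] x y //= /f_inj/IHn. Qed.

Lemma continuous_nonzero_mul_gt0 (R : realType) (f : R -> R) (a b : R) :
  a <= b -> {within `[a, b], continuous f} ->
  (forall x, a <= x <= b -> f x != 0) -> 0 < f a * f b.
Proof.
move=> le_ab f_cont f_neq0.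
have fa_neq0 : f a != 0 by apply: f_neq0; rewrite lexx le_ab.
have fb_neq0 : f b != 0 by apply: f_neq0; rewrite lexx le_ab.
rewrite ltNge; apply/negP => le_fafb0.
have : Num.min (f a) (f b) <= 0 <= Num.max (f a) (f b).
  rewrite ge_min le_max.
  by case: (ltgtP (f a) 0) => [fa_lt0|fa_gt0|/eqP]; [nra|nra|rewrite (negbTE fa_neq0)].
move=> /(IVT le_ab f_cont) [c].
by rewrite in_itv /= => /f_neq0/eqP.
Qed.

Lemma connected_component_itv {R : realType} {A : set R} {s t x : R} :
  connected_component A s t -> s <= x <= t -> A x.
Proof.
move=> [C [Cs CA /connected_intervalP C_itv] Ct] sxt.
exact/CA/(C_itv s t).
Qed.

Section HenonInverse.
Context {R : realType}.

Definition henon_inv_total (p : R * R) : R * R :=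
  (p.1 - 1 / (p.1 + p.2), p.1 + p.2).

Local Notation F := henon_inv_total.

Lemma henon_invE (p : R * R) :
  p.1 + p.2 != 0 -> henon_inv p = Some (F p).
Proof. by rewrite /henon_inv => /negbTE ->. Qed.

Lemma henon_inv_total_inj : injective F.
Proof.
move=> [u v] [u' v'] [/= eq1 eq2]; rewrite eq2 in eq1.
have eq_u : u = u' by move/addIr: eq1.
by rewrite eq_u in eq2 *; rewrite (addrI _ eq2).
Qed.

Lemma henon_inv_iterE k (p : R * R) :
  (forall j, (j < k)%N -> (iter j F p).1 + (iter j F p).2 != 0) ->
  henon_inv_iter k p = Some (iter k F p).
Proof.
elim: k => [//|k IHk] sum_neq0 /=.
rewrite IHk => [|j lt_jk]; last exact/sum_neq0/ltnW.
exact/henon_invE/sum_neq0.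
Qed.

Lemma T_iterP n (t : R) :
  T n t <-> forall k, (k < n)%N ->
    (iter k F (t, 0)).1 + (iter k F (t, 0)).2 != 0.
Proof.
split => [Tt|sum_neq0 k lt_kn]; last first.
  exists (iter k F (t, 0)); split; last exact: sum_neq0.
  by apply: henon_inv_iterE => j lt_jk; apply/sum_neq0/(ltn_trans lt_jk).
elim/ltn_ind => k IHk lt_kn.
have [q [qE q_neq0]] := Tt k lt_kn.
rewrite henon_inv_iterE in qE; last by move=> j lt_jk; exact/IHk/(ltn_trans lt_jk).
by case: qE => ->.
Qed.

Lemma henon_inv_nE n (t : R) : T n t -> henon_inv_n n t = iter n F (t, 0).
Proof. by move/T_iterP => sum_neq0; rewrite /henon_inv_n henon_inv_iterE. Qed.

Lemma continuous_henon_inv_orbit k (u : R) :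
  (forall j, (j < k)%N -> (iter j F (u, 0)).1 + (iter j F (u, 0)).2 != 0) ->
  {for u, continuous (fun v => (iter k F (v, 0)).1)} /\
  {for u, continuous (fun v => (iter k F (v, 0)).2)}.
Proof.
elim: k => [|k IHk] sum_neq0 /=; first by split; [exact: cvg_id|exact: cvg_cst].
have [cont1 cont2] := IHk (fun j lt_jk => sum_neq0 j (ltnW lt_jk)).
have cont_sum : {for u, continuous (fun v => (iter k F (v, 0)).1 + (iter k F (v, 0)).2)}.
  exact: cvgD cont1 cont2.
split; last exact: cont_sum.
under [X in {for u, continuous X}]funext do rewrite div1r.
exact: cvgB cont1 (cvgV (sum_neq0 k (ltnSn k)) cont_sum).
Qed.

Lemma henon_inv_orbit_sum_mul_gt0 {n k : nat} {a b : R} :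
  a <= b -> (forall x, a <= x <= b -> T n x) -> (k < n)%N ->
  0 < ((iter k F (a, 0)).1 + (iter k F (a, 0)).2) *
      ((iter k F (b, 0)).1 + (iter k F (b, 0)).2).
Proof.
move=> le_ab T_ab lt_kn.
pose sum_k x := (iter k F (x, 0)).1 + (iter k F (x, 0)).2.
apply: (@continuous_nonzero_mul_gt0 _ sum_k) => // [|x /T_ab/T_iterP]; last exact.
apply: continuous_in_subspaceT => x; rewrite inE /= in_itv /= => /T_ab/T_iterP Tx.
have [cont1 cont2] := @continuous_henon_inv_orbit k x
  (fun j lt_jk => Tx j (ltn_trans lt_jk lt_kn)).
exact: cvgD cont1 cont2.
Qed.

Lemma henon_inv_total_lt {p q : R * R} :
  p.1 < q.1 -> p.2 <= q.2 -> 0 < (p.1 + p.2) * (q.1 + q.2) ->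
  (F p).1 < (F q).1 /\ (F p).2 < (F q).2.
Proof.
move=> lt1 le2 sum_mul_gt0; split => /=; last lra.
have [sp_neq0 sq_neq0] : p.1 + p.2 != 0 /\ q.1 + q.2 != 0.
  by apply/andP; rewrite -negb_or -mulf_eq0 gt_eqF.
have inv_diff : 1 / (p.1 + p.2) - 1 / (q.1 + q.2) =
    (q.1 + q.2 - (p.1 + p.2)) / ((p.1 + p.2) * (q.1 + q.2)).
  by field; rewrite sp_neq0 sq_neq0.
have : 0 < (q.1 + q.2 - (p.1 + p.2)) / ((p.1 + p.2) * (q.1 + q.2)).
  by apply: divr_gt0 => //; lra.
rewrite -inv_diff; lra.
Qed.

Lemma henon_inv_orbit_mono {n k : nat} {a b : R} :
  a < b -> (forall x, a <= x <= b -> T n x) -> (k <= n)%N ->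
  (iter k F (a, 0)).1 < (iter k F (b, 0)).1 /\
  (iter k F (a, 0)).2 <= (iter k F (b, 0)).2.
Proof.
move=> lt_ab T_ab; elim: k => [_|k IHk lt_kn]; first by rewrite lexx.
have [lt1 le2] := IHk (ltnW lt_kn).
have [lt1' lt2'] := henon_inv_total_lt lt1 le2
  (henon_inv_orbit_sum_mul_gt0 (ltW lt_ab) T_ab lt_kn).
by split; last exact: ltW.
Qed.

Lemma preimage_line_iter m (q : R * R) :
  preimage_line m (iter m F q) -> q.2 = 0.
Proof.
case: m => [//|m] [s Ts].
by rewrite henon_inv_nE // => /(iter_inj henon_inv_total_inj) <-.
Qed.

End HenonInverse.

Theorem mainTheorem3 (R : realType) (n : nat) (hn : (1 <= n)%N) :
  (forall s t : R, @T R n s -> @connected_component R (@T R n) s t -> s < t ->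
     (henon_inv_n n s).1 < (henon_inv_n n t).1 /\
     (henon_inv_n n s).2 < (henon_inv_n n t).2) /\
  @preimage_line R n.-1 `&` @preimage_line R n = set0.
Proof.
case: n hn => [//|m] _; split.
  move=> s t Ts cc_st lt_st.
  have T_st x : s <= x <= t -> T m.+1 x := connected_component_itv cc_st.
  have Tt : T m.+1 t by apply: T_st; rewrite lexx ltW.
  rewrite !henon_inv_nE //.
  have [lt1 le2] := henon_inv_orbit_mono lt_st T_st (leqnSn m).
  exact: henon_inv_total_lt lt1 le2
    (henon_inv_orbit_sum_mul_gt0 (ltW lt_st) T_st (ltnSn m)).
apply/seteqP; split => // p [/= on_prev [t Tt t_p]].
move: on_prev; rewrite -t_p henon_inv_nE // iterSr => /preimage_line_iter /= t_eq0.
by have := (T_iterP _ _).1 Tt 0 isT; rewrite /= t_eq0 eqxx.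
Qed.
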